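(* Let $l<u$ be real, let $\Delta Q$ be real with $0<\Delta Q\le u-l$, and let $\epsilon\ge0$, $0\le\delta<1$. Then for every $b>0$, $\frac{\partial \Delta C(b)}{\partial b}\le 0$, with equality if and only if $\Delta Q=u-l$. Consequently, at every $b>0$ with $\epsilon-\log\Delta C(b)-\log(1-\delta)\ne0$, $f$ is differentiable with $f'(b)\le 0$, and $f'(b)=0$ if and only if $\Delta Q=u-l$.
   Context: For $b>0$ and $p\in[l,u]$, $C_p(b)= 1-\frac12\left(e^{-\frac{p-l}{b}}+e^{-\frac{u-p}{b}}\right)$ (the integral $\int_l^u\frac{1}{2b}e^{-|x-p|/b}dx$), and $\Delta C(b)=\frac{C_{l+\Delta Q}(b)}{C_l(b)}$. The map $f$ is defined for $b>0$ with $\epsilon-\log\Delta C(b)-\log(1-\delta)\neq 0$ by $f(b)=\frac{\Delta Q}{\epsilon-\log\Delta C(b)-\log(1-\delta)}$. *)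

From Stdlib Require Import Reals.
Open Scope R_scope.

Definition Cp (l u p b : R) : R :=
  1 - / 2 * (exp (- ((p - l) / b)) + exp (- ((u - p) / b))).

Definition DeltaC (l u dQ b : R) : R :=
  Cp l u (l + dQ) b / Cp l u l b.

Definition fmap (l u dQ eps delta b : R) : R :=
  dQ / (eps - ln (DeltaC l u dQ b) - ln (1 - delta)).

From Stdlib Require Import Reals Lra.
From Coquelicot Require Import Coquelicot.
Open Scope R_scope.

(* With x = exp (-dQ/b) and y = exp (-(u-l-dQ)/b) one has C_l(b) = (1 - xy)/2 and
   C_{l+dQ}(b) = (2 - x - y)/2.  Differentiating the quotient (2 - x - y)/(1 - xy) gives
   - (dQ x (1-y)^2 + (u-l-dQ) y (1-x)^2) / (b^2 (1-xy)^2), a negative combination of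
   squares which vanishes exactly when u-l-dQ = 0 (i.e. y = 1).  Composing with
   t |-> dQ / (c - ln t) multiplies the derivative by the positive factor
   dQ / (DeltaC(b) (eps - log DeltaC(b) - log(1-delta))^2), so f inherits the sign. *)

Definition ratio (L q b : R) : R :=
  (2 - exp (- (q / b)) - exp (- ((L - q) / b))) / (1 - exp (- (L / b))).

Definition ratio_deriv_numer (L q b : R) : R :=
  q * exp (- (q / b)) * (1 - exp (- ((L - q) / b))) ^ 2
  + (L - q) * exp (- ((L - q) / b)) * (1 - exp (- (q / b))) ^ 2.

Definition ratio_deriv (L q b : R) : R :=
  - ratio_deriv_numer L q b / (b ^ 2 * (1 - exp (- (L / b))) ^ 2).

Lemma exp_opp_div_lt1 (a b : R) : 0 < a -> 0 < b -> exp (- (a / b)) < 1.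
Proof.
  intros ha hb; rewrite <- exp_0; apply exp_increasing.
  pose proof (Rdiv_lt_0_compat a b ha hb); lra.
Qed.

Lemma exp_opp_div_le1 (a b : R) : 0 <= a -> 0 < b -> exp (- (a / b)) <= 1.
Proof.
  intros [ha | <-] hb.
  - left; apply exp_opp_div_lt1; assumption.
  - rewrite Rdiv_0_l, Ropp_0, exp_0; lra.
Qed.

Lemma exp_opp_div_add (a c b : R) : 0 < b ->
  exp (- ((a + c) / b)) = exp (- (a / b)) * exp (- (c / b)).
Proof. intros hb; rewrite <- exp_plus; f_equal; field; lra. Qed.

Lemma DeltaC_ratio (l u dQ b : R) : l < u -> 0 < b ->
  DeltaC l u dQ b = ratio (u - l) dQ b.
Proof.
  intros hlu hb; unfold DeltaC, Cp, ratio.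
  replace (l + dQ - l) with dQ by ring.
  replace (u - (l + dQ)) with (u - l - dQ) by ring.
  rewrite Rminus_diag, Rdiv_0_l, Ropp_0, exp_0.
  assert (exp (- ((u - l) / b)) < 1) by (apply exp_opp_div_lt1; lra).
  field; lra.
Qed.

Lemma ratio_pos (L q b : R) : 0 < q -> q <= L -> 0 < b -> 0 < ratio L q b.
Proof.
  intros hq hqL hb; unfold ratio.
  assert (exp (- (q / b)) < 1) by (apply exp_opp_div_lt1; assumption).
  assert (exp (- ((L - q) / b)) <= 1) by (apply exp_opp_div_le1; lra).
  assert (exp (- (L / b)) < 1) by (apply exp_opp_div_lt1; lra).
  apply Rdiv_lt_0_compat; lra.
Qed.

Lemma is_derive_ratio (L q b : R) : 0 < L -> 0 < b ->
  is_derive (ratio L q) b (ratio_deriv L q b).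
Proof.
  intros hL hb.
  assert (hxy : exp (- (L / b)) = exp (- (q / b)) * exp (- ((L - q) / b))).
  { rewrite <- exp_opp_div_add by lra; do 3 f_equal; ring. }
  assert (exp (- (L / b)) < 1) by (apply exp_opp_div_lt1; lra).
  unfold ratio, ratio_deriv, ratio_deriv_numer.
  auto_derive.
  - repeat split; lra.
  - unfold Rdiv in *; rewrite hxy in *; field; lra.
Qed.

Section RatioDerivSign.

Variables L q b : R.
Hypotheses (hq : 0 < q) (hqL : q <= L) (hb : 0 < b).

Let x := exp (- (q / b)).
Let y := exp (- ((L - q) / b)).

Let x_pos : 0 < x. Proof. apply exp_pos. Qed.
Let x_lt1 : x < 1. Proof. apply exp_opp_div_lt1; assumption. Qed.
Let y_pos : 0 < y. Proof. apply exp_pos. Qed.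
Let y_le1 : y <= 1. Proof. apply exp_opp_div_le1; lra. Qed.

Lemma ratio_deriv_numer_ge0 : 0 <= ratio_deriv_numer L q b.
Proof.
  unfold ratio_deriv_numer; fold x y.
  assert (0 <= q * x * (1 - y) ^ 2) by (apply Rmult_le_pos; nra).
  assert (0 <= (L - q) * y * (1 - x) ^ 2) by (apply Rmult_le_pos; nra).
  lra.
Qed.

Lemma ratio_deriv_numer_eq0 : ratio_deriv_numer L q b = 0 <-> q = L.
Proof.
  unfold ratio_deriv_numer; fold x y; split.
  - intros H0; destruct (Req_dec q L) as [E | E]; [assumption | exfalso].
    assert (0 <= q * x * (1 - y) ^ 2) by (apply Rmult_le_pos; nra).
    assert (0 < (L - q) * y * (1 - x) ^ 2).
    { apply Rmult_lt_0_compat; [apply Rmult_lt_0_compat; lra | apply pow_lt; lra]. }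
    lra.
  - intros <-; unfold y; rewrite Rminus_diag, Rdiv_0_l, Ropp_0, exp_0; ring.
Qed.

Let exp_L_lt1 : exp (- (L / b)) < 1.
Proof. apply exp_opp_div_lt1; lra. Qed.

Let denom_pos : 0 < b ^ 2 * (1 - exp (- (L / b))) ^ 2.
Proof. apply Rmult_lt_0_compat; apply pow_lt; lra. Qed.

Lemma ratio_deriv_nonpos : ratio_deriv L q b <= 0.
Proof.
  unfold ratio_deriv, Rdiv.
  assert (0 < / (b ^ 2 * (1 - exp (- (L / b))) ^ 2)) by (apply Rinv_0_lt_compat, denom_pos).
  pose proof ratio_deriv_numer_ge0; nra.
Qed.

Lemma ratio_deriv_eq0 : ratio_deriv L q b = 0 <-> q = L.
Proof.
  rewrite <- ratio_deriv_numer_eq0; unfold ratio_deriv; split.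
  - intros H0; apply (f_equal (fun z => - z * (b ^ 2 * (1 - exp (- (L / b))) ^ 2))) in H0.
    rewrite Ropp_0, Rmult_0_l in H0; rewrite <- H0; field; lra.
  - intros H0; rewrite H0; unfold Rdiv; ring.
Qed.

End RatioDerivSign.

Lemma is_derive_div_ln_gap (g : R -> R) (q c c' b d : R) :
  is_derive g b d -> 0 < g b -> c - ln (g b) - c' <> 0 ->
  is_derive (fun t => q / (c - ln (g t) - c')) b
    (q / (g b * (c - ln (g b) - c') ^ 2) * d).
Proof.
  intros hg hgb hgap.
  auto_derive.
  - split; [exists d; exact hg | tauto].
  - change (Derive (fun x : R => g x) b) with (Derive g b).
    rewrite (is_derive_unique g b d hg); field; split; lra.
Qed.

Lemma Rmult_pos_nonpos_eq0_iff (k d : R) (P : Prop) : 0 < k ->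
  d <= 0 /\ (d = 0 <-> P) -> k * d <= 0 /\ (k * d = 0 <-> P).
Proof.
  intros hk [hd hdP]; split; [nra |].
  rewrite <- hdP; split; [intros H0; destruct (Rmult_integral _ _ H0); lra | intros ->; ring].
Qed.

Theorem lemma4p2 (l u dQ eps delta : R)
  (hlu : l < u) (hdQ0 : 0 < dQ) (hdQ1 : dQ <= u - l)
  (heps : 0 <= eps) (hd0 : 0 <= delta) (hd1 : delta < 1) :
  (forall b : R, 0 < b ->
     exists d : R, derivable_pt_lim (DeltaC l u dQ) b d /\
       d <= 0 /\ (d = 0 <-> dQ = u - l)) /\
  (forall b : R, 0 < b ->
     eps - ln (DeltaC l u dQ b) - ln (1 - delta) <> 0 ->
     exists d : R, derivable_pt_lim (fmap l u dQ eps delta) b d /\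
       d <= 0 /\ (d = 0 <-> dQ = u - l)).
Proof.
  assert (hDeltaC : forall b, 0 < b ->
    is_derive (DeltaC l u dQ) b (ratio_deriv (u - l) dQ b)).
  { intros b hb; apply (is_derive_ext_loc (ratio (u - l) dQ)).
    - apply (filter_imp (fun t => 0 < t)); [intros t ht; symmetry; apply DeltaC_ratio; lra |].
      exact (open_gt 0 b hb).
    - apply is_derive_ratio; lra. }
  assert (hsign : forall b, 0 < b ->
    ratio_deriv (u - l) dQ b <= 0 /\ (ratio_deriv (u - l) dQ b = 0 <-> dQ = u - l)).
  { intros b hb; split; [apply ratio_deriv_nonpos | apply ratio_deriv_eq0]; assumption. }
  split; intros b hb.
  - exists (ratio_deriv (u - l) dQ b); split.
    + apply is_derive_Reals, hDeltaC, hb.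
    + apply hsign, hb.
  - intros hgap.
    assert (hpos : 0 < DeltaC l u dQ b).
    { rewrite DeltaC_ratio by lra; apply ratio_pos; lra. }
    eexists; split.
    + apply is_derive_Reals, (is_derive_div_ln_gap (DeltaC l u dQ)); [apply hDeltaC, hb | exact hpos | exact hgap].
    + apply Rmult_pos_nonpos_eq0_iff; [| apply hsign, hb].
      apply Rdiv_lt_0_compat; [exact hdQ0 |].
      apply Rmult_lt_0_compat; [exact hpos | apply pow2_gt_0, hgap].
Qed.
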